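(* Let $S$ be a discrete random variable (the hidden hypothesis) with finite domain $\mathrm{dom}(S)$. Let $O_1,\dots,O_N$ be random variables with finite discrete domains (the observations), and let $O^1,\dots,O^K$ ($K\ge 0$) be further observation random variables (the past observations), each with a finite discrete domain. Assume that all of $O_1,\dots,O_N,O^1,\dots,O^K$ are mutually conditionally independent given $S$. Assume the uniform observation entropy (UOE) property: for every $s\in\mathrm{dom}(S)$ with $P(S=s)>0$ and all $i,j\in\{1,\dots,N\}$, $$H(O_i\mid S=s)=H(O_j\mid S=s).$$ Fix values $o^1,\dots,o^K$ such that the event $O^{-}:=\{O^1=o^1,\dots,O^K=o^K\}$ has positive probability. Then the set of maximizers of $I(S,O'\mid O^{-})$ over $O'\in\{O_1,\dots,O_N\}$ equals the set of maximizers of $H(O'\mid O^{-})$ over $O'\in\{O_1,\dots,O_N\}$, that is, $$\operatorname{argmax}_{O'\in\{O_1,\dots,O_N\}} I(S,O'\mid O^{-})=\operatorname{argmax}_{O'\in\{O_1,\dots,O_N\}} H(O'\mid O^{-}).$$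
   Context: All information-theoretic quantities conditioned on the event $O^{-}$ are computed under the probability measure conditioned on $O^{-}$. In particular: - $H(O'\mid O^{-})$ is the entropy of $O'$ under $P(\cdot\mid O^{-})$; - $H(O'\mid S,O^{-})=\sum_s P(S=s\mid O^{-})\,H(O'\mid S=s,O^{-})$; - $I(S,O'\mid O^{-})$ is the mutual information between $S$ and $O'$ under $P(\cdot\mid O^{-})$. The generative model is: $s\sim P(S)$, and given $S=s$ each observation $o_i\sim P(O_i\mid S=s)$. *)

From mathcomp Require Import all_boot all_order all_algebra.
From mathcomp Require Import reals exp.
Set Implicit Arguments. Unset Strict Implicit. Unset Printing Implicit Defensive.
Import Order.TTheory GRing.Theory Num.Theory.
Local Open Scope ring_scope.

(* Shannon entropy (in nats) of a finitely supported mass function f;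
   the convention 0 * ln 0 = 0 holds automatically. *)
Definition entropy (R : realType) (T : finType) (f : T -> R) : R :=
  - \sum_(x : T) f x * ln (f x).

(* Generative model:
   p : T -> R                          prior of the hidden hypothesis S on dom(S)=T;
   lik i s o = P(O_i = o | S = s)      for observations O_i : D i, i < N;
   q k s e   = P(O^k = e | S = s)      for past observations O^k : E k, k < K;
   ok k      = the fixed observed value o^k.
   Given S, all O_i and O^k are drawn independently. *)

Definition past_lik (R : realType) (T : finType) (K : nat) (E : 'I_K -> finType)
  (q : forall k : 'I_K, T -> E k -> R) (ok : forall k : 'I_K, E k) (s : T) : R :=
  \prod_(k < K) q k s (ok k).

Definition P_past (R : realType) (T : finType) (p : T -> R) (K : nat)
  (E : 'I_K -> finType) (q : forall k : 'I_K, T -> E k -> R)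
  (ok : forall k : 'I_K, E k) : R :=
  \sum_(s : T) p s * past_lik q ok s.

(* P(S = s, O_i = o | O^-) = P(S=s) P(O_i=o|S=s) P(O^-|S=s) / P(O^-)
   (the other observations are marginalized out). *)
Definition P_SO_past (R : realType) (T : finType) (p : T -> R) (N : nat)
  (D : 'I_N -> finType) (lik : forall i : 'I_N, T -> D i -> R) (K : nat)
  (E : 'I_K -> finType) (q : forall k : 'I_K, T -> E k -> R)
  (ok : forall k : 'I_K, E k) (i : 'I_N) (s : T) (o : D i) : R :=
  p s * lik i s o * past_lik q ok s / P_past p q ok.

Arguments P_SO_past {R T} p {N D} lik {K E} q ok i s o.

Definition P_S_past (R : realType) (T : finType) (p : T -> R) (K : nat)
  (E : 'I_K -> finType) (q : forall k : 'I_K, T -> E k -> R)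
  (ok : forall k : 'I_K, E k) (s : T) : R :=
  p s * past_lik q ok s / P_past p q ok.

Definition P_O_past (R : realType) (T : finType) (p : T -> R) (N : nat)
  (D : 'I_N -> finType) (lik : forall i : 'I_N, T -> D i -> R) (K : nat)
  (E : 'I_K -> finType) (q : forall k : 'I_K, T -> E k -> R)
  (ok : forall k : 'I_K, E k) (i : 'I_N) (o : D i) : R :=
  \sum_(s : T) P_SO_past p lik q ok i s o.

Arguments P_O_past {R T} p {N D} lik {K E} q ok i o.

Definition condH (R : realType) (T : finType) (p : T -> R) (N : nat)
  (D : 'I_N -> finType) (lik : forall i : 'I_N, T -> D i -> R) (K : nat)
  (E : 'I_K -> finType) (q : forall k : 'I_K, T -> E k -> R)
  (ok : forall k : 'I_K, E k) (i : 'I_N) : R :=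
  entropy (P_O_past p lik q ok i).

Definition condMI (R : realType) (T : finType) (p : T -> R) (N : nat)
  (D : 'I_N -> finType) (lik : forall i : 'I_N, T -> D i -> R) (K : nat)
  (E : 'I_K -> finType) (q : forall k : 'I_K, T -> E k -> R)
  (ok : forall k : 'I_K, E k) (i : 'I_N) : R :=
  \sum_(s : T) \sum_(o : D i)
     P_SO_past p lik q ok i s o *
     ln (P_SO_past p lik q ok i s o /
         (P_S_past p q ok s * P_O_past p lik q ok i o)).

Definition argmax (R : realType) (N : nat) (f : 'I_N -> R) : {set 'I_N} :=
  [set i : 'I_N | [forall j : 'I_N, f j <= f i]].

From mathcomp Require Import all_boot all_order all_algebra.
From mathcomp Require Import reals exp.
From mathcomp Require Import ring.
Import Order.TTheory GRing.Theory Num.Theory.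
Local Open Scope ring_scope.

(* Writing w for the posterior P(S | O^-), conditional independence makes the
   joint posterior of (S, O_i) equal to w s * P(O_i = o | S = s), so
   I(S, O_i | O^-) = H(O_i | O^-) - sum_s w s * H(O_i | S = s).  By the UOE
   property the subtracted term does not depend on i, hence both quantities
   have the same maximizers. *)

Lemma eq_entropy {R : realType} {T : finType} {f g : T -> R} :
  f =1 g -> entropy f = entropy g.
Proof. by move=> fg; congr (- _); apply: eq_bigr => x _; rewrite fg. Qed.

Lemma eq_argmax_sub {R : realType} {N : nat} (f g : 'I_N -> R) :
  (forall i j, f i - f j = g i - g j) -> argmax f = argmax g.
Proof.
move=> fg; apply/setP => i; rewrite !inE; apply: eq_forallb => j.
by rewrite -subr_ge0 fg subr_ge0.
Qed.

Section MutualInformation.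
Context {R : realType} {T D : finType} (w : T -> R) (l : T -> D -> R).

Definition marginal (o : D) : R := \sum_s w s * l s o.

Definition cond_entropy : R := \sum_s w s * entropy (l s).

Hypothesis w_ge0 : forall s, 0 <= w s.
Hypothesis l_ge0 : forall s, 0 < w s -> forall o, 0 <= l s o.

Lemma joint_ge0 s o : 0 <= w s * l s o.
Proof.
have [->|wsN0] := eqVneq (w s) 0; first by rewrite mul0r.
by rewrite mulr_ge0 ?l_ge0 // lt0r wsN0 w_ge0.
Qed.

Lemma marginal_gt0 s o : 0 < w s * l s o -> 0 < marginal o.
Proof.
move=> joint_gt0; rewrite /marginal (bigD1 s) //=.
by rewrite ltr_wpDr // sumr_ge0 // => t _; apply: joint_ge0.
Qed.

Lemma mutual_info_term s o :
  w s * l s o * ln (w s * l s o / (w s * marginal o))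
  = w s * (l s o * ln (l s o)) - w s * l s o * ln (marginal o).
Proof.
have [->|wsN0] := eqVneq (w s) 0; first by rewrite !mul0r subr0.
have ws_gt0 : 0 < w s by rewrite lt0r wsN0 w_ge0.
have [->|lN0] := eqVneq (l s o) 0; first by rewrite !(mulr0, mul0r) subr0.
have l_gt0 : 0 < l s o by rewrite lt0r lN0 l_ge0.
have m_gt0 : 0 < marginal o := @marginal_gt0 s o (mulr_gt0 ws_gt0 l_gt0).
have -> : w s * l s o / (w s * marginal o) = l s o / marginal o.
  by field; rewrite !gt_eqF.
by rewrite ln_div ?posrE //; ring.
Qed.

Lemma mutual_info_decomposition :
  \sum_s \sum_o w s * l s o * ln (w s * l s o / (w s * marginal o))
  = entropy marginal - cond_entropy.
Proof.
under eq_bigr do under eq_bigr do rewrite mutual_info_term.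
under eq_bigr do rewrite sumrB -mulr_sumr.
rewrite sumrB exchange_big /= [LHS]addrC /cond_entropy; congr (_ + _).
  by congr (- _); apply: eq_bigr => o _; rewrite -mulr_suml.
rewrite -sumrN; apply: eq_bigr => s _.
by rewrite /entropy mulrN opprK.
Qed.

End MutualInformation.

Section PastObservations.
Context {R : realType} {T : finType} {p : T -> R}.
Context {N : nat} {D : 'I_N -> finType} {lik : forall i : 'I_N, T -> D i -> R}.
Context {K : nat} {E : 'I_K -> finType} {q : forall k : 'I_K, T -> E k -> R}.
Context {ok : forall k : 'I_K, E k}.

Hypothesis p_ge0 : forall s, 0 <= p s.
Hypothesis q_ge0 : forall k s e, 0 < p s -> 0 <= q k s e.
Hypothesis past_gt0 : 0 < P_past p q ok.

Let w := P_S_past p q ok.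

Lemma P_S_past_ge0 s : 0 <= w s.
Proof.
have [ps0|psN0] := eqVneq (p s) 0; first by rewrite /w /P_S_past ps0 !mul0r.
have ps_gt0 : 0 < p s by rewrite lt0r psN0 p_ge0.
apply: divr_ge0; last exact: ltW.
by rewrite mulr_ge0 // prodr_ge0 // => k _; apply: q_ge0.
Qed.

Lemma P_S_past_gt0_prior s : 0 < w s -> 0 < p s.
Proof.
move=> ws_gt0; rewrite lt0r p_ge0 andbT; apply: contraTneq ws_gt0.
by rewrite /w /P_S_past => ->; rewrite !mul0r ltxx.
Qed.

Lemma P_SO_pastE i s o : P_SO_past p lik q ok i s o = w s * lik i s o.
Proof. by rewrite /P_SO_past /w /P_S_past; ring. Qed.

Lemma P_O_pastE i : P_O_past p lik q ok i =1 marginal w (lik i).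
Proof. by move=> o; apply: eq_bigr => s _; rewrite P_SO_pastE. Qed.

Hypothesis lik_ge0 : forall i s o, 0 < p s -> 0 <= lik i s o.

Lemma condMIE i :
  condMI p lik q ok i = condH p lik q ok i - cond_entropy w (lik i).
Proof.
rewrite /condMI /condH (eq_entropy (P_O_pastE i)).
rewrite -mutual_info_decomposition; last 2 first.
- exact: P_S_past_ge0.
- by move=> s /P_S_past_gt0_prior ps_gt0 o; apply: lik_ge0.
apply: eq_bigr => s _; apply: eq_bigr => o _.
by rewrite P_SO_pastE P_O_pastE.
Qed.

End PastObservations.

Theorem theorem1 (R : realType) (T : finType) (p : T -> R)
  (N : nat) (D : 'I_N -> finType) (lik : forall i : 'I_N, T -> D i -> R)
  (K : nat) (E : 'I_K -> finType) (q : forall k : 'I_K, T -> E k -> R)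
  (ok : forall k : 'I_K, E k)
  (* P(S) is a probability distribution on dom(S) *)
  (hp0 : forall s, 0 <= p s) (hp1 : \sum_(s : T) p s = 1)
  (* P(O_i | S = s) is a distribution (for s of positive probability) *)
  (hlik0 : forall i s o, 0 < p s -> 0 <= lik i s o)
  (hlik1 : forall i s, 0 < p s -> \sum_(o : D i) lik i s o = 1)
  (* P(O^k | S = s) is a distribution (for s of positive probability) *)
  (hq0 : forall k s e, 0 < p s -> 0 <= q k s e)
  (hq1 : forall k s, 0 < p s -> \sum_(e : E k) q k s e = 1)
  (* uniform observation entropy: H(O_i | S = s) = H(O_j | S = s) *)
  (huoe : forall s, 0 < p s -> forall i j : 'I_N,
            entropy (lik i s) = entropy (lik j s))
  (* the past-observation event O^- has positive probability *)
  (hpast : 0 < P_past p q ok) :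
  argmax (condMI p lik q ok) = argmax (condH p lik q ok).
Proof.
set w := P_S_past p q ok.
have cond_entropy_uniform i j : cond_entropy w (lik i) = cond_entropy w (lik j).
  apply: eq_bigr => s _.
  have [ws0|wsN0] := eqVneq (w s) 0; first by rewrite ws0 !mul0r.
  have ws_gt0 : 0 < w s by rewrite lt0r wsN0 (P_S_past_ge0 hp0 hq0 hpast).
  by rewrite (huoe s _ i j) // (P_S_past_gt0_prior hp0 _ ws_gt0).
apply: eq_argmax_sub => i j.
rewrite !(condMIE hp0 hq0 hpast hlik0) (cond_entropy_uniform i j); ring.
Qed.
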